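(* Let $C,A_1,\dots,A_M$ be real symmetric $N\times N$ matrices and $b\in\mathbb{R}^M$ such that the SDP $\min\{\operatorname{Tr}(C^TX):\operatorname{Tr}(A_i^TX)=b_i\ (i=1,\dots,M),\ X\succeq0\}$ has a feasible $X\succ0$ and finite optimal value. For $t>0$ let $X_t$ be the minimizer of $\operatorname{Tr}(C^TX)-\frac1t\log\det X$ subject to $\operatorname{Tr}(A_i^TX)=b_i$, $X\succ0$. Given $t_{k-1}>0$, the function $$g_{k-1}(t)=\operatorname{Tr}(C^TX_{t_{k-1}})-\frac{N}{t_{k-1}}+\frac Nt$$ satisfies $g_{k-1}(t)\le\operatorname{Tr}(C^TX_t)$ for every $t\ge t_{k-1}$. *)

From mathcomp Require Import all_boot all_order all_algebra.
From mathcomp Require Import all_classical all_reals all_analysis.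
Set Implicit Arguments. Unset Strict Implicit. Unset Printing Implicit Defensive.
Import Order.TTheory GRing.Theory Num.Theory.
Local Open Scope ring_scope.

Section SDP.
Variables (R : realType) (N M : nat).

Definition sym_mx (X : 'M[R]_N) : Prop := X^T = X.

Definition psd (X : 'M[R]_N) : Prop :=
  sym_mx X /\ forall v : 'rV[R]_N, 0 <= (v *m X *m v^T) ord0 ord0.

Definition pd (X : 'M[R]_N) : Prop :=
  sym_mx X /\ forall v : 'rV[R]_N, v != 0 -> 0 < (v *m X *m v^T) ord0 ord0.

Definition affine_feasible (A : 'I_M -> 'M[R]_N) (b : 'I_M -> R) (X : 'M[R]_N) : Prop :=
  forall i : 'I_M, \tr ((A i)^T *m X) = b i.

Definition sdp_feasible A b (X : 'M[R]_N) : Prop :=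
  psd X /\ affine_feasible A b X.

Definition sdp_strictly_feasible A b (X : 'M[R]_N) : Prop :=
  pd X /\ affine_feasible A b X.

Definition sdp_obj (C X : 'M[R]_N) : R := \tr (C^T *m X).

Definition sdp_finite_value C A b : Prop :=
  (exists X, sdp_feasible A b X) /\
  (exists m : R, forall X, sdp_feasible A b X -> m <= sdp_obj C X).

Definition barrier_obj (t : R) (C X : 'M[R]_N) : R :=
  sdp_obj C X - t^-1 * ln (\det X).

Definition central_point (t : R) C A b (X : 'M[R]_N) : Prop :=
  sdp_strictly_feasible A b X /\
  forall Y, sdp_strictly_feasible A b Y -> barrier_obj t C X <= barrier_obj t C Y.

End SDP.

From mathcomp Require Import all_boot all_order all_algebra.
From mathcomp Require Import all_classical all_reals all_analysis.
From mathcomp Require Import ring lra zify.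
Set Implicit Arguments. Unset Strict Implicit. Unset Printing Implicit Defensive.
Import Order.TTheory GRing.Theory Num.Theory.
Local Open Scope ring_scope.

(* Minimality of the barrier objective at X_t along the
   segment towards another strictly feasible Q, together with
   det (1 + e F) = 1 + e tr F + O(e^2), gives the first-order condition
     tr (X_t^-1 Q) - N <= t (Tr(C^T Q) - Tr(C^T X_t)).
   Used for (t, Q = X_{t_{k-1}}) and for (t_{k-1}, Q = X_t), it bounds
   a = tr (X_t^-1 X_{t_{k-1}}) and b = tr (X_{t_{k-1}}^-1 X_t) in terms of the
   gap g = Tr(C^T X_{t_{k-1}}) - Tr(C^T X_t), while Cauchy-Schwarz for the
   Frobenius product gives N^2 <= a b.  Hence N^2 <= (N + t g) (N - t_{k-1} g),
   i.e. g <= N / t_{k-1} - N / t.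
   Symmetry of the data, strict feasibility and finiteness of the optimal value
   are not used: they only serve to guarantee that central points exist. *)

Section RealInequalities.
Variable R : realFieldType.

Lemma sqr_le_mul_of_quadratic_ge0 (a b c : R) :
  (forall x y, 0 <= x ^+ 2 * a - 2 * x * y * c + y ^+ 2 * b) -> c ^+ 2 <= a * b.
Proof.
move=> q.
have a0 : 0 <= a by have := q 1 0; rewrite expr1n; lra.
have b0 : 0 <= b by have := q 0 1; rewrite expr1n; lra.
have := q c a; have := q (b + 1) c.
have [->|a_gt0] := eqVneq a 0; rewrite !expr2.
  have := mulr_ge0 b0 (sqr_ge0 c); rewrite expr2 mul0r; nra.
have {}a0 : 0 < a by rewrite lt_def a_gt0.
nra.
Qed.

Lemma le0_of_le_mul_small (a B : R) :
  (forall e, 0 < e <= 1 -> a <= e * B) -> a <= 0.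
Proof.
move=> h; apply/ler_addgt0Pr => d d0; rewrite add0r.
have B1 : 0 < `|B| + 1 by rewrite ltr_wpDl.
pose e := Num.min 1 (d / (`|B| + 1)).
have e0 : 0 < e by rewrite lt_min ltr01 divr_gt0.
have e1 : e <= 1 by rewrite ge_min lexx.
have ed : e * (`|B| + 1) <= d by rewrite -ler_pdivlMr // ge_min lexx orbT.
apply: le_trans (h e _) _; first by rewrite e0 e1.
apply: le_trans (ler_wpM2l (ltW e0) (ler_norm B)) _.
by apply: le_trans ed; rewrite ler_wpM2l // ?lerDl // ltW.
Qed.

Lemma gap_le_of_sqr_le_mul (n s t a b p q : R) :
  0 <= n -> 0 < s <= t -> 0 <= a -> 0 <= b -> n ^+ 2 <= a * b ->
  a - n <= t * (p - q) -> b - n <= s * (q - p) ->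
  p - n / s + n / t <= q.
Proof.
move=> n0 /andP[s0 st] a0 b0 nab ha hb.
set g := p - q.
have t0 : 0 < t by exact: lt_le_trans st.
suff gst : g * (s * t) <= n * (t - s).
  rewrite -subr_ge0.
  have -> : q - (p - n / s + n / t) = (n * (t - s) - g * (s * t)) / (s * t).
    by rewrite /g; field; rewrite ?gt_eqF.
  by rewrite divr_ge0 ?subr_ge0 // mulr_ge0 // ltW.
have [g0|g0] := leP g 0.
  have : 0 <= s * t by rewrite mulr_ge0 // ltW.
  have : 0 <= n * (t - s) by rewrite mulr_ge0 // subr_ge0.
  nra.
have hab : n ^+ 2 <= (n + t * g) * (n - s * g).
  apply: le_trans nab _; apply: ler_pM => //; rewrite /g; lra.
rewrite expr2 in hab.
have : 0 <= g * (n * (t - s) - g * (s * t)) by nra.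
by rewrite pmulr_rge0 // subr_ge0.
Qed.

End RealInequalities.

Section Trace.
Variable R : realFieldType.

Lemma mxtrace_mul_tr_ge0 m n (M : 'M[R]_(m, n)) : 0 <= \tr (M *m M^T).
Proof.
apply: sumr_ge0 => i _; rewrite mxE; apply: sumr_ge0 => j _.
by rewrite mxE -expr2 sqr_ge0.
Qed.

Lemma mxtrace_mul_sqr_le n (G H : 'M[R]_n) :
  \tr (G *m H) ^+ 2 <= \tr (G *m G^T) * \tr (H *m H^T).
Proof.
apply: sqr_le_mul_of_quadratic_ge0 => x y.
suff -> : x ^+ 2 * \tr (G *m G^T) - 2 * x * y * \tr (G *m H) + y ^+ 2 * \tr (H *m H^T)
          = \tr ((x *: G - y *: H^T) *m (x *: G - y *: H^T)^T).
  exact: mxtrace_mul_tr_ge0.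
rewrite [(_ - _)^T]linearB !linearZ /= trmxK !scalerN.
rewrite mulmxBl !mulmxBr -!scalemxAl -!scalemxAr.
rewrite !raddfB /= !mxtraceZ -trmx_mul mxtrace_tr (mxtrace_mulC H^T); ring.
Qed.

End Trace.

Section DetExpansion.
Variable R : numFieldType.

Lemma horner_char_poly n (A : 'M[R]_n) x : (char_poly A).[x] = \det (x%:M - A).
Proof.
rewrite /char_poly -[LHS]/(horner_eval x _) -det_map_mx; congr (\det _).
apply/matrixP => i j; rewrite !mxE /=.
by rewrite /horner_eval hornerD hornerN hornerMn hornerX hornerC.
Qed.

(* det (1 + e F) = e^n char_poly(-F)(1/e), whose two leading coefficients are 1 and tr F. *)
Lemma det_1DZ_expansion n (F : 'M[R]_n) : exists K, forall e, 0 < e <= 1 ->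
  `|\det (1 + e *: F) - (1 + e * \tr F)| <= K * e ^+ 2.
Proof.
case: n F => [|m] F.
  by exists 0 => e _; rewrite det_mx00 /mxtrace big_ord0 mulr0 addr0 subrr normr0 mul0r.
set p := char_poly (- F).
exists (\sum_(i < m) `|p`_i|) => e /andP[e0 e1].
have pm1 : p`_m.+1 = 1.
  by have /monicP := char_poly_monic (- F); rewrite lead_coefE size_char_poly.
have pm : p`_m = \tr F.
  by have := char_poly_trace (- F) (ltn0Sn m); rewrite /= linearN opprK.
have coefE i : (i <= m.+1)%N -> e ^+ m.+1 * (p`_i * e^-1 ^+ i) = p`_i * e ^+ (m.+1 - i).
  by move=> im; rewrite exprB ?unitfE ?gt_eqF // exprVn; ring.
have -> : 1 + e *: F = e *: (e^-1%:M - - F).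
  by rewrite opprK scalerDr -scalemx1 scalerA mulfV ?gt_eqF // scale1r.
rewrite detZ -horner_char_poly horner_coef size_char_poly big_distrr /=.
rewrite big_ord_recr big_ord_recr /= !coefE // pm1 pm subnn subSnn expr0 expr1.
set T := \sum_(i < m) _.
have -> : T + \tr F * e + 1 * 1 - (1 + e * \tr F) = T by ring.
rewrite (le_trans (ler_norm_sum _ _ _)) // mulr_suml ler_sum // => i _.
rewrite coefE; last by rewrite ltnW // ltnS ltnW.
rewrite normrM ler_wpM2l // ger0_norm; last by rewrite exprn_ge0 // ltW.
by apply: ler_wiXn2l; [exact: ltW | exact: e1 | have := ltn_ord i; lia].
Qed.

End DetExpansion.

Section LogDet.
Variable R : realType.

Lemma subr1V_le_ln (x : R) : 0 < x -> 1 - x^-1 <= ln x.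
Proof.
move=> x0; have := @le_ln1Dx R (x^-1 - 1).
rewrite [1 + _]addrC subrK lnV ?posrE // lerNl opprB; apply.
by rewrite ltrBDl subrr invr_gt0.
Qed.

Lemma mxtrace_le_of_ln_det n (F : 'M[R]_n) c :
  (forall e, 0 < e <= 1 -> 0 < \det (1 + e *: F) /\ ln (\det (1 + e *: F)) <= e * c) ->
  \tr F <= c.
Proof.
move=> hF; have [K hK] := det_1DZ_expansion F.
set t := \tr F; rewrite -subr_le0.
apply: (@le0_of_le_mul_small _ _ (K + `|c * t| + `|c| * K)) => e he.
have /andP[e0 e1] := he.
have [x0 lnx] := hF e he; have := hK e he.
move: (\det _) x0 lnx => x x0 lnx; set r := x - _ => hr.
have K0 : 0 <= K by have := le_trans (normr_ge0 r) hr; rewrite pmulr_lge0 // exprn_gt0.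
have hx : x - 1 <= e * c * x.
  have := le_trans (subr1V_le_ln x0) lnx.
  by rewrite -(ler_pM2r x0) mulrBl mulVf ?gt_eqF // mul1r mulrC.
have hxr : x = 1 + e * t + r by rewrite /r addrC subrK.
have r1 : - r <= K * e ^+ 2 by apply: le_trans hr; rewrite -normrN ler_norm.
have r2 : e * (c * r) <= e ^+ 2 * (`|c| * K).
  have : e * (c * r) <= e * (`|c| * (K * e ^+ 2)).
    apply: ler_wpM2l; first exact: ltW.
    apply: le_trans (ler_norm _) _.
    by rewrite normrM ler_wpM2l.
  move/le_trans; apply.
  rewrite [leLHS](_ : _ = e * (e ^+ 2 * (`|c| * K))); last by ring.
  by rewrite ler_piMl // mulr_ge0 ?sqr_ge0 ?mulr_ge0.
have ct : e ^+ 2 * (c * t) <= e ^+ 2 * `|c * t| by rewrite ler_wpM2l ?sqr_ge0 ?ler_norm.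
suff : e * (t - c) <= e * (e * (K + `|c * t| + `|c| * K)) by rewrite ler_pM2l.
rewrite hxr in hx; rewrite !expr2 in r1 r2 ct; nra.
Qed.

End LogDet.

Lemma block_mx_schur (R : fieldType) n (a : R) (u : 'rV[R]_n) (D : 'M[R]_n) :
  a != 0 -> exists2 E : 'M[R]_(1 + n), E \in unitmx &
  block_mx a%:M u u^T D = E^T *m block_mx a%:M 0 0 (D - a^-1 *: (u^T *m u)) *m E.
Proof.
move=> a0; exists (block_mx 1 (a^-1 *: u) 0 1).
  by rewrite unitmxE det_ublock !det1 mulr1 unitr1.
rewrite tr_block_mx !trmx1 trmx0 !mulmx_block.
rewrite !mul1mx !mul0mx !mulmx0 !mulmx1 !addr0 !add0r.
rewrite mul_scalar_mx scalerA mulfV // scale1r.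
rewrite mul_mx_scalar linearZ /= scalerA mulfV // scale1r.
by rewrite -scalemxAr addrC subrK.
Qed.

Lemma invmx_mul_tr (R : comUnitRingType) n (L : 'M[R]_n) :
  L \in unitmx -> invmx (L *m L^T) = (invmx L)^T *m invmx L.
Proof.
move=> Lu; have LLu : L *m L^T \in unitmx by rewrite unitmx_mul unitmx_tr Lu.
rewrite -[RHS](mulKmx LLu) trmx_inv -mulmxA [L^T *m _]mulmxA.
by rewrite mulmxV ?unitmx_tr // mul1mx mulmxV // mulmx1.
Qed.

Lemma mxtrace_invmx_mul_factor (R : comUnitRingType) n (L K : 'M[R]_n) :
  L \in unitmx ->
  \tr (invmx (L *m L^T) *m (K *m K^T)) = \tr ((invmx L *m K) *m (invmx L *m K)^T).
Proof.
move=> Lu; rewrite invmx_mul_tr // trmx_mul -mulmxA mxtrace_mulC.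
by rewrite -!mulmxA.
Qed.

Section PositiveDefinite.
Variable R : realType.

Lemma pd_mulmx_tr n (E P : 'M[R]_n) : E \in unitmx -> pd P -> pd (E *m P *m E^T).
Proof.
move=> Eu [Ps Pp]; split; first by rewrite /sym_mx !trmx_mul trmxK Ps mulmxA.
move=> v v0; rewrite !mulmxA -mulmxA -trmx_mul -mulmxA mulmxA; apply: Pp.
by apply: contra v0 => /eqP vE0; rewrite -[v](mulmxK Eu) vE0 mul0mx.
Qed.

Lemma pd_ulsubmx m n (P : 'M[R]_(m + n)) : pd P -> pd (ulsubmx P).
Proof.
move=> [Ps Pp]; split; first by rewrite /sym_mx trmx_ulsub Ps.
move=> v v0; have := Pp (row_mx v 0).
rewrite -{1}[P]submxK mul_row_block tr_row_mx mul_row_col.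
rewrite !mul0mx !addr0 trmx0 mulmx0 addr0; apply.
by apply: contra v0 => /eqP/(congr1 lsubmx); rewrite row_mxKl linear0 => ->.
Qed.

Lemma pd_drsubmx m n (P : 'M[R]_(m + n)) : pd P -> pd (drsubmx P).
Proof.
move=> [Ps Pp]; split; first by rewrite /sym_mx trmx_drsub Ps.
move=> v v0; have := Pp (row_mx 0 v).
rewrite -{1}[P]submxK mul_row_block tr_row_mx mul_row_col.
rewrite !mul0mx !add0r trmx0 mulmx0 add0r; apply.
by apply: contra v0 => /eqP/(congr1 rsubmx); rewrite row_mxKr linear0 => ->.
Qed.

Lemma pd11_gt0 (P : 'M[R]_1) : pd P -> 0 < P 0 0.
Proof.
by move=> [_ Pp]; have := Pp 1 (oner_neq0 _); rewrite trmx1 mulmx1 mul1mx.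
Qed.

Lemma pd_factor n (P : 'M[R]_n) : pd P -> exists2 L, L \in unitmx & P = L *m L^T.
Proof.
elim: n P => [|n IH] P hP.
  by exists 1%:M; [exact: unitmx1 | rewrite [P]flatmx0 [RHS]flatmx0].
have [Ps _] := hP; rewrite -[n.+1]/(1 + n)%N in P hP Ps *.
set a := ulsubmx P 0 0; set u := ursubmx P; set D := drsubmx P.
have a0 : 0 < a := pd11_gt0 (pd_ulsubmx hP).
have PE : P = block_mx a%:M u u^T D.
  by rewrite -mx11_scalar /u trmx_ursub Ps submxK.
have [E Eu] := block_mx_schur u D (lt0r_neq0 a0); rewrite -PE.
set S := D - _ => hE.
have hS : pd S.
  have Eti : invmx E^T \in unitmx by rewrite unitmx_inv unitmx_tr.
  have := pd_drsubmx (pd_mulmx_tr Eti hP).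
  rewrite hE trmx_inv trmxK !mulmxA mulVmx ?unitmx_tr // mul1mx -mulmxA mulmxV //.
  by rewrite mulmx1 block_mxKdr.
have [K Ku SK] := IH S hS.
exists (E^T *m block_mx (Num.sqrt a)%:M 0 0 K).
  rewrite unitmx_mul unitmx_tr Eu unitmxE det_lblock det_scalar expr1.
  by rewrite unitrM -unitmxE Ku andbT unitfE gt_eqF // sqrtr_gt0.
rewrite trmx_mul trmxK mulmxA -[_ *m _ *m _^T]mulmxA hE; congr (_ *m _ *m _).
rewrite tr_block_mx !trmx0 tr_scalar_mx mulmx_block !mulmx0 !mul0mx !addr0 !add0r.
by rewrite -scalar_mxM -expr2 sqr_sqrtr ?ltW // -SK.
Qed.

Lemma pd_det_gt0 n (P : 'M[R]_n) : pd P -> 0 < \det P.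
Proof.
move=> /pd_factor[L Lu ->]; rewrite det_mulmx det_tr -expr2.
by rewrite exprn_even_gt0 //= -unitfE -unitmxE Lu.
Qed.

Lemma mxtrace_invmx_mul_ge0 n (P Q : 'M[R]_n) : pd P -> pd Q -> 0 <= \tr (invmx P *m Q).
Proof.
move=> /pd_factor[L Lu ->] /pd_factor[K _ ->].
by rewrite mxtrace_invmx_mul_factor // mxtrace_mul_tr_ge0.
Qed.

Lemma mxtrace_invmx_mul_sqr_ge n (P Q : 'M[R]_n) : pd P -> pd Q ->
  n%:R ^+ 2 <= \tr (invmx P *m Q) * \tr (invmx Q *m P).
Proof.
move=> /pd_factor[L Lu ->] /pd_factor[K Ku ->].
rewrite !mxtrace_invmx_mul_factor //.
have <- : \tr ((invmx L *m K) *m (invmx K *m L)) = n%:R.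
  by rewrite mulmxA -[_ *m K *m _]mulmxA mulmxV // mulmx1 mulVmx // mxtrace1.
exact: mxtrace_mul_sqr_le.
Qed.

End PositiveDefinite.

Section CentralPath.
Variables (R : realType) (N M : nat) (C : 'M[R]_N) (A : 'I_M -> 'M[R]_N) (b : 'I_M -> R).

Lemma sdp_strictly_feasible_conv (P Q : 'M[R]_N) e :
  sdp_strictly_feasible A b P -> sdp_strictly_feasible A b Q -> 0 <= e <= 1 ->
  sdp_strictly_feasible A b ((1 - e) *: P + e *: Q).
Proof.
move=> [[Ps Pp] Pa] [[Qs Qp] Qa] /andP[e0 e1]; split; [split|].
- by rewrite /sym_mx raddfD /= !linearZ /= Ps Qs.
- move=> v v0; rewrite mulmxDr mulmxDl -!scalemxAr -!scalemxAl.
  have := Pp v v0; have := Qp v v0.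
  move: (v *m P *m v^T) (v *m Q *m v^T) => p q; rewrite !mxE; nra.
- by move=> i; rewrite mulmxDr -!scalemxAr raddfD /= !mxtraceZ Pa Qa; ring.
Qed.

Lemma sdp_obj_conv (P Q : 'M[R]_N) e :
  sdp_obj C ((1 - e) *: P + e *: Q) = (1 - e) * sdp_obj C P + e * sdp_obj C Q.
Proof. by rewrite /sdp_obj mulmxDr -!scalemxAr raddfD /= !mxtraceZ. Qed.

Lemma central_point_first_order t (P Q : 'M[R]_N) :
  0 < t -> central_point t C A b P -> sdp_strictly_feasible A b Q ->
  \tr (invmx P *m Q) - N%:R <= t * (sdp_obj C Q - sdp_obj C P).
Proof.
move=> t0 [[Ppd Pa] Pmin] hQ.
have [L Lu PL] := pd_factor Ppd.
set W := invmx L *m Q *m (invmx L)^T.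
have -> : \tr (invmx P *m Q) - N%:R = \tr (W - 1).
  by rewrite raddfB /= mxtrace1 PL invmx_mul_tr // -mulmxA mxtrace_mulC.
apply: mxtrace_le_of_ln_det => e /andP[e0 e1].
set Y := (1 - e) *: P + e *: Q.
have hY : sdp_strictly_feasible A b Y.
  by apply: sdp_strictly_feasible_conv => //; rewrite ltW.
have YL : Y = L *m (1 + e *: (W - 1)) *m L^T.
  have LW : L *m W *m L^T = Q.
    by rewrite /W !mulmxA mulmxV // mul1mx -mulmxA -trmx_mul mulmxV // trmx1 mulmx1.
  rewrite mulmxDr mulmx1 mulmxDl -PL -scalemxAr -scalemxAl mulmxBr mulmxBl mulmx1 LW -PL.
  by rewrite /Y scalerBl scale1r scalerBr addrAC addrA.
have detY : \det Y = \det P * \det (1 + e *: (W - 1)).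
  by rewrite YL PL !det_mulmx; ring.
have dP := pd_det_gt0 Ppd.
have dx : 0 < \det (1 + e *: (W - 1)).
  by have := pd_det_gt0 hY.1; rewrite detY pmulr_rgt0.
split => //.
have := Pmin Y hY; rewrite /barrier_obj detY lnM ?posrE // sdp_obj_conv => hmin.
have ti : 0 < t^-1 by rewrite invr_gt0.
rewrite -(ler_pM2l ti) mulrCA mulKf ?gt_eqF //; lra.
Qed.

End CentralPath.

Theorem lemma4p11 (R : realType) (N M : nat)
  (C : 'M[R]_N) (A : 'I_M -> 'M[R]_N) (b : 'I_M -> R)
  (hC : sym_mx C) (hA : forall i, sym_mx (A i))
  (hstrict : exists X0, sdp_strictly_feasible A b X0)
  (hfin : sdp_finite_value C A b)
  (tk1 : R) (htk1 : 0 < tk1) (Xk1 : 'M[R]_N) (hXk1 : central_point tk1 C A b Xk1)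
  (t : R) (ht : tk1 <= t) (Xt : 'M[R]_N) (hXt : central_point t C A b Xt) :
  sdp_obj C Xk1 - N%:R / tk1 + N%:R / t <= sdp_obj C Xt.
Proof.
have t0 : 0 < t := lt_le_trans htk1 ht.
have [[hXk1_pd _] _] := hXk1; have [[hXt_pd _] _] := hXt.
apply: (gap_le_of_sqr_le_mul (ler0n _ N) _ _ _
          (mxtrace_invmx_mul_sqr_ge hXt_pd hXk1_pd)).
- by rewrite htk1 ht.
- exact: mxtrace_invmx_mul_ge0.
- exact: mxtrace_invmx_mul_ge0.
- exact: central_point_first_order t0 hXt hXk1.1.
- exact: central_point_first_order htk1 hXk1 hXt.1.
Qed.
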